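(* In a closed coherent differential summable resource category $\mathcal L$ (see context), for all objects $X,Y$, $$D(\mathrm{Ev}^{X,Y})=\mu_Y\circ_!D(\mathrm{Ev}^{X,SY})\circ_!\psi^1_{X\Rightarrow SY,X}$$ as morphisms in $\mathcal L_!((X\Rightarrow SY)\&SX,SY)$ (using $S(X\Rightarrow Y)=X\Rightarrow SY$ and $S((X\Rightarrow SY)\&X)=(X\Rightarrow S^2Y)\&SX$).
   Context: $\mathcal L$ is a symmetric monoidal closed category with finite products ($\&$, projections $p_i$, terminal $\top$), with a resource comonad $(!,\mathrm{der},\mathrm{dig})$ and Seely isomorphisms $m^0\in\mathcal L(1,!\top)$, $m^2_{X_0,X_1}\in\mathcal L(!X_0\otimes !X_1,!(X_0\&X_1))$. Kleisli category $\mathcal L_!$: $\mathcal L_!(X,Y)=\mathcal L(!X,Y)$, $g\circ_!f=g\circ!f\circ\mathrm{dig}_X$; $\lambda(h)=h\circ\mathrm{der}_X$. $\mathcal L_!$ is cartesian closed with $X\Rightarrow Y=\,!X\multimap Y$, evaluation $\mathrm{Ev}^{X,Y}\in\mathcal L_!((X\Rightarrow Y)\&X,Y)$, currying $\mathrm{Cur}$. $\mathcal L$ has zero morphisms and a summability structure $(S,\pi_0,\pi_1,\sigma)$ ($\pi_0,\pi_1$ jointly monic; $f_0+f_1=\sigma\langle f_0,f_1\rangle$) satisfying the axioms of Ehrhard's coherent differentiation (homsets partial commutative monoids, composition and $\otimes$ distribute over sums); $\iota_0=\langle\mathrm{id},0\rangle$; $\tau:S^2\Rightarrow S$ with $\pi_0\tau=\pi_0\pi_0$,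 $\pi_1\tau=\pi_1\pi_0+\pi_0\pi_1$; $S$ preserves products strictly; tensorial strengths $\varphi^0:SX_0\otimes X_1\to S(X_0\otimes X_1)$, $\varphi^1:X_0\otimes SX_1\to S(X_0\otimes X_1)$ with $\pi_i\varphi^0=\pi_i\otimes X_1$, $\pi_i\varphi^1=X_0\otimes\pi_i$, and $L_{X_0,X_1}=\tau\circ S\varphi^1\circ\varphi^0$, characterised by $\pi_0L=\pi_0\otimes\pi_0$, $\pi_1L=\pi_1\otimes\pi_0+\pi_0\otimes\pi_1$. A natural $\partial_X\in\mathcal L(!SX,S!X)$ satisfies: $\pi_0\partial_X=!\pi_0$; $\partial_X\circ!\iota_0=\iota_0$, $\tau\circ S\partial_X\circ\partial_{SX}=\partial_X\circ!\tau$; $S\mathrm{der}_X\circ\partial_X=\mathrm{der}_{SX}$, $S\mathrm{dig}_X\circ\partial_X=\partial_{!X}\circ!\partial_X\circ\mathrm{dig}_{SX}$; $S(m^0)^{-1}\partial_\top=\iota_0(m^0)^{-1}!0$, $S(m^2)^{-1}\partial_{X_0\&X_1}=L_{!X_0,!X_1}(\partial_{X_0}\otimes\partial_{X_1})(m^2_{SX_0,SX_1})^{-1}$; Schwarz symmetry. Derived: $D$ on $\mathcal L_!$, $DX=SX$, $Df=Sf\circ\partial_X$; $\mu_X=\lambda(\tau_X)$; $\psi^0_{X_0,X_1}=\lambda(SX_0\&\iota_0)$, $\psi^1_{X_0,X_1}=\lambda(\iota_0\&SX_1)\in\mathcal L_!(X_0\&SX_1,S(X_0\&X_1))$. It is assumed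 that $\mathrm{Cur}(D\mathrm{Ev}^{X,Y}\circ_!\psi^0_{X\Rightarrow Y,X})\in\mathcal L_!(S(X\Rightarrow Y),X\Rightarrow SY)$ is an isomorphism, treated as the identity. *)

Record CatData : Type := {
  Ob : Type;
  Hom : Ob -> Ob -> Type;
  comp : forall (A B C : Ob), Hom B C -> Hom A B -> Hom A C;
  idm : forall (A : Ob), Hom A A;
  tens : Ob -> Ob -> Ob;
  tensm : forall (A B C D : Ob), Hom A B -> Hom C D -> Hom (tens A C) (tens B D);
  One : Ob;
  alpha : forall (A B C : Ob), Hom (tens (tens A B) C) (tens A (tens B C));
  alphai : forall (A B C : Ob), Hom (tens A (tens B C)) (tens (tens A B) C);
  lun : forall (A : Ob), Hom (tens One A) A;
  luni : forall (A : Ob), Hom A (tens One A);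
  run : forall (A : Ob), Hom (tens A One) A;
  runi : forall (A : Ob), Hom A (tens A One);
  gam : forall (A B : Ob), Hom (tens A B) (tens B A);
  lolli : Ob -> Ob -> Ob;
  ev : forall (A B : Ob), Hom (tens (lolli A B) A) B;
  cur : forall (A B C : Ob), Hom (tens C A) B -> Hom C (lolli A B);
  With : Ob -> Ob -> Ob;
  p0 : forall (A B : Ob), Hom (With A B) A;
  p1 : forall (A B : Ob), Hom (With A B) B;
  pair : forall (C A B : Ob), Hom C A -> Hom C B -> Hom C (With A B);
  Top : Ob;
  term : forall (A : Ob), Hom A Top;
  Bang : Ob -> Ob;
  bangm : forall (A B : Ob), Hom A B -> Hom (Bang A) (Bang B);
  der : forall (A : Ob), Hom (Bang A) A;
  dig : forall (A : Ob), Hom (Bang A) (Bang (Bang A));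
  m0 : Hom One (Bang Top);
  m0i : Hom (Bang Top) One;
  m2 : forall (A B : Ob), Hom (tens (Bang A) (Bang B)) (Bang (With A B));
  m2i : forall (A B : Ob), Hom (Bang (With A B)) (tens (Bang A) (Bang B));
  zero : forall (A B : Ob), Hom A B;
  S : Ob -> Ob;
  Sm : forall (A B : Ob), Hom A B -> Hom (S A) (S B);
  pi0 : forall (A : Ob), Hom (S A) A;
  pi1 : forall (A : Ob), Hom (S A) A;
  sigma : forall (A : Ob), Hom (S A) A;
  iota0 : forall (A : Ob), Hom A (S A);
  tau : forall (A : Ob), Hom (S (S A)) (S A);
  flip : forall (A : Ob), Hom (S (S A)) (S (S A));
  phi0 : forall (A B : Ob), Hom (tens (S A) B) (S (tens A B));
  phi1 : forall (A B : Ob), Hom (tens A (S B)) (S (tens A B));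
  (* inverse of the canonical map <S p0, S p1> : S(A & B) -> SA & SB *)
  Sprodi : forall (A B : Ob), Hom (With (S A) (S B)) (S (With A B));
  dpart : forall (A : Ob), Hom (Bang (S A)) (S (Bang A));
  (* inverse (in the Kleisli category) of Cur(D Ev o_! psi^0) *)
  curDi : forall (X Y : Ob),
      Hom (Bang (lolli (Bang X) (S Y))) (S (lolli (Bang X) Y))
}.

Arguments Ob c : rename.
Arguments Hom {c} _ _.
Arguments comp {c A B C} _ _.
Arguments idm {c} A.
Arguments tens {c} _ _.
Arguments tensm {c A B C D} _ _.
Arguments One {c}.
Arguments alpha {c} A B C.
Arguments alphai {c} A B C.
Arguments lun {c} A.
Arguments luni {c} A.
Arguments run {c} A.
Arguments runi {c} A.
Arguments gam {c} A B.
Arguments lolli {c} _ _.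
Arguments ev {c} A B.
Arguments cur {c A B C} _.
Arguments With {c} _ _.
Arguments p0 {c} A B.
Arguments p1 {c} A B.
Arguments pair {c C A B} _ _.
Arguments Top {c}.
Arguments term {c} A.
Arguments Bang {c} _.
Arguments bangm {c A B} _.
Arguments der {c} A.
Arguments dig {c} A.
Arguments m0 {c}.
Arguments m0i {c}.
Arguments m2 {c} A B.
Arguments m2i {c} A B.
Arguments zero {c} A B.
Arguments S {c} _.
Arguments Sm {c A B} _.
Arguments pi0 {c} A.
Arguments pi1 {c} A.
Arguments sigma {c} A.
Arguments iota0 {c} A.
Arguments tau {c} A.
Arguments flip {c} A.
Arguments phi0 {c} A B.
Arguments phi1 {c} A B.
Arguments Sprodi {c} A B.
Arguments dpart {c} A.
Arguments curDi {c} X Y.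

Declare Scope cat_scope.
Notation "g ∘ f" := (comp g f) (at level 40, left associativity) : cat_scope.
Open Scope cat_scope.

Section Derived.
Context {c : CatData}.

(* f0 + f1 = g : (f0,f1) summable with witness h and sigma h = g *)
Definition IsSum {A B : Ob c} (f0 f1 g : Hom A B) : Prop :=
  exists h : Hom A (S B), pi0 B ∘ h = f0 /\ pi1 B ∘ h = f1 /\ sigma B ∘ h = g.

Definition withm {A B C D : Ob c} (f : Hom A B) (g : Hom C D)
  : Hom (With A C) (With B D) := pair (f ∘ p0 A C) (g ∘ p1 A C).

Definition Sprod (A B : Ob c) : Hom (S (With A B)) (With (S A) (S B)) :=
  pair (Sm (p0 A B)) (Sm (p1 A B)).

Definition aW (A B C : Ob c) : Hom (With (With A B) C) (With A (With B C)) :=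
  pair (p0 A B ∘ p0 (With A B) C) (pair (p1 A B ∘ p0 (With A B) C) (p1 (With A B) C)).

Definition kcomp {A B C : Ob c} (g : Hom (Bang B) C) (f : Hom (Bang A) B)
  : Hom (Bang A) C := g ∘ bangm f ∘ dig A.
Definition lam {A B : Ob c} (h : Hom A B) : Hom (Bang A) B := h ∘ der A.

Definition Imp (X Y : Ob c) : Ob c := lolli (Bang X) Y.
Definition Ev (X Y : Ob c) : Hom (Bang (With (Imp X Y) X)) Y :=
  ev (Bang X) Y ∘ tensm (der (Imp X Y)) (idm (Bang X)) ∘ m2i (Imp X Y) X.
Definition Cur {Z X Y : Ob c} (f : Hom (Bang (With Z X)) Y) : Hom (Bang Z) (Imp X Y) :=
  cur (f ∘ m2 Z X).

Definition Dk {A B : Ob c} (f : Hom (Bang A) B) : Hom (Bang (S A)) (S B) :=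
  Sm f ∘ dpart A.
Definition mu (X : Ob c) : Hom (Bang (S (S X))) (S X) := lam (tau X).
Definition psi0 (A B : Ob c) : Hom (Bang (With (S A) B)) (S (With A B)) :=
  lam (Sprodi A B ∘ withm (idm (S A)) (iota0 B)).
Definition psi1 (A B : Ob c) : Hom (Bang (With A (S B))) (S (With A B)) :=
  lam (Sprodi A B ∘ withm (iota0 A) (idm (S B))).
Definition Lmap (A B : Ob c) : Hom (tens (S A) (S B)) (S (tens A B)) :=
  tau (tens A B) ∘ Sm (phi1 A B) ∘ phi0 A (S B).

Definition curD (X Y : Ob c) : Hom (Bang (S (Imp X Y))) (Imp X (S Y)) :=
  Cur (kcomp (Dk (Ev X Y)) (psi0 (Imp X Y) X)).

End Derived.

Record ClosedCDRC (c : CatData) : Prop := {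
  comp_assoc : forall (A B C D : Ob c) (f : Hom A B) (g : Hom B C) (h : Hom C D),
      h ∘ (g ∘ f) = h ∘ g ∘ f;
  comp_idl : forall (A B : Ob c) (f : Hom A B), idm B ∘ f = f;
  comp_idr : forall (A B : Ob c) (f : Hom A B), f ∘ idm A = f;
  tensm_id : forall (A B : Ob c), tensm (idm A) (idm B) = idm (tens A B);
  tensm_comp : forall (A B C D E F : Ob c) (f : Hom A B) (g : Hom B C)
      (h : Hom D E) (k : Hom E F), tensm (g ∘ f) (k ∘ h) = tensm g k ∘ tensm f h;
  alpha_iso1 : forall A B C : Ob c, alphai A B C ∘ alpha A B C = idm _;
  alpha_iso2 : forall A B C : Ob c, alpha A B C ∘ alphai A B C = idm _;
  lun_iso1 : forall A : Ob c, luni A ∘ lun A = idm _;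
  lun_iso2 : forall A : Ob c, lun A ∘ luni A = idm _;
  run_iso1 : forall A : Ob c, runi A ∘ run A = idm _;
  run_iso2 : forall A : Ob c, run A ∘ runi A = idm _;
  gam_inv : forall A B : Ob c, gam B A ∘ gam A B = idm _;
  alpha_nat : forall (A A' B B' C C' : Ob c) (f : Hom A A') (g : Hom B B') (h : Hom C C'),
      alpha A' B' C' ∘ tensm (tensm f g) h = tensm f (tensm g h) ∘ alpha A B C;
  lun_nat : forall (A B : Ob c) (f : Hom A B), lun B ∘ tensm (idm One) f = f ∘ lun A;
  run_nat : forall (A B : Ob c) (f : Hom A B), run B ∘ tensm f (idm One) = f ∘ run A;
  gam_nat : forall (A A' B B' : Ob c) (f : Hom A A') (g : Hom B B'),
      gam A' B' ∘ tensm f g = tensm g f ∘ gam A B;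
  pentagon : forall A B C D : Ob c,
      alpha A B (tens C D) ∘ alpha (tens A B) C D
      = tensm (idm A) (alpha B C D) ∘ alpha A (tens B C) D ∘ tensm (alpha A B C) (idm D);
  triangle : forall A B : Ob c,
      tensm (idm A) (lun B) ∘ alpha A One B = tensm (run A) (idm B);
  hexagon : forall A B C : Ob c,
      alpha B C A ∘ gam A (tens B C) ∘ alpha A B C
      = tensm (idm B) (gam A C) ∘ alpha B A C ∘ tensm (gam A B) (idm C);
  ev_cur : forall (A B C : Ob c) (f : Hom (tens C A) B),
      ev A B ∘ tensm (cur f) (idm A) = f;
  cur_ev : forall (A B C : Ob c) (g : Hom C (lolli A B)),
      cur (ev A B ∘ tensm g (idm A)) = g;
  pair_p0 : forall (C A B : Ob c) (f : Hom C A) (g : Hom C B), p0 A B ∘ pair f g = f;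
  pair_p1 : forall (C A B : Ob c) (f : Hom C A) (g : Hom C B), p1 A B ∘ pair f g = g;
  pair_eta : forall (C A B : Ob c) (h : Hom C (With A B)), pair (p0 A B ∘ h) (p1 A B ∘ h) = h;
  term_unique : forall (A : Ob c) (f : Hom A Top), f = term A;
  bangm_id : forall A : Ob c, bangm (idm A) = idm (Bang A);
  bangm_comp : forall (A B C : Ob c) (f : Hom A B) (g : Hom B C),
      bangm (g ∘ f) = bangm g ∘ bangm f;
  der_nat : forall (A B : Ob c) (f : Hom A B), der B ∘ bangm f = f ∘ der A;
  dig_nat : forall (A B : Ob c) (f : Hom A B), dig B ∘ bangm f = bangm (bangm f) ∘ dig A;
  der_dig : forall A : Ob c, der (Bang A) ∘ dig A = idm (Bang A);
  bangder_dig : forall A : Ob c, bangm (der A) ∘ dig A = idm (Bang A);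
  dig_dig : forall A : Ob c, dig (Bang A) ∘ dig A = bangm (dig A) ∘ dig A;
  m0_iso1 : m0i ∘ m0 = idm (@One c);
  m0_iso2 : m0 ∘ m0i = idm (Bang (@Top c));
  m2_iso1 : forall A B : Ob c, m2i A B ∘ m2 A B = idm _;
  m2_iso2 : forall A B : Ob c, m2 A B ∘ m2i A B = idm _;
  m2_nat : forall (A A' B B' : Ob c) (f : Hom A A') (g : Hom B B'),
      m2 A' B' ∘ tensm (bangm f) (bangm g) = bangm (withm f g) ∘ m2 A B;
  m2_assoc : forall A B C : Ob c,
      bangm (aW A B C) ∘ m2 (With A B) C ∘ tensm (m2 A B) (idm (Bang C))
      = m2 A (With B C) ∘ tensm (idm (Bang A)) (m2 B C) ∘ alpha (Bang A) (Bang B) (Bang C);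
  m2_runit : forall A : Ob c,
      bangm (p0 A Top) ∘ m2 A Top ∘ tensm (idm (Bang A)) m0 = run (Bang A);
  m2_lunit : forall A : Ob c,
      bangm (p1 Top A) ∘ m2 Top A ∘ tensm m0 (idm (Bang A)) = lun (Bang A);
  m2_sym : forall A B : Ob c,
      bangm (pair (p1 A B) (p0 A B)) ∘ m2 A B = m2 B A ∘ gam (Bang A) (Bang B);
  m2_dig : forall A B : Ob c,
      bangm (pair (bangm (p0 A B)) (bangm (p1 A B))) ∘ dig (With A B) ∘ m2 A B
      = m2 (Bang A) (Bang B) ∘ tensm (dig A) (dig B);
  m0_dig : bangm (term (Bang Top)) ∘ dig Top ∘ m0 = (@m0 c);
  zero_compl : forall (A B C : Ob c) (f : Hom A B), zero B C ∘ f = zero A C;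
  zero_compr : forall (A B C : Ob c) (g : Hom B C), g ∘ zero A B = zero A C;
  zero_tensl : forall (A B C D : Ob c) (g : Hom C D),
      tensm (zero A B) g = zero (tens A C) (tens B D);
  zero_tensr : forall (A B C D : Ob c) (f : Hom A B),
      tensm f (zero C D) = zero (tens A C) (tens B D);
  Sm_id : forall A : Ob c, Sm (idm A) = idm (S A);
  Sm_comp : forall (A B C : Ob c) (f : Hom A B) (g : Hom B C), Sm (g ∘ f) = Sm g ∘ Sm f;
  pi0_nat : forall (A B : Ob c) (f : Hom A B), pi0 B ∘ Sm f = f ∘ pi0 A;
  pi1_nat : forall (A B : Ob c) (f : Hom A B), pi1 B ∘ Sm f = f ∘ pi1 A;
  sigma_nat : forall (A B : Ob c) (f : Hom A B), sigma B ∘ Sm f = f ∘ sigma A;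
  pi_jointly_monic : forall (A B : Ob c) (h h' : Hom A (S B)),
      pi0 B ∘ h = pi0 B ∘ h' -> pi1 B ∘ h = pi1 B ∘ h' -> h = h';
  sum_zero : forall (A B : Ob c) (f : Hom A B), IsSum f (zero A B) f;
  sum_comm : forall (A B : Ob c) (f0 f1 g : Hom A B), IsSum f0 f1 g -> IsSum f1 f0 g;
  sum_assoc : forall (A B : Ob c) (f0 f1 f2 g01 g : Hom A B),
      IsSum f0 f1 g01 -> IsSum g01 f2 g ->
      exists g12, IsSum f1 f2 g12 /\ IsSum f0 g12 g;
  sum_compl : forall (A B C : Ob c) (h : Hom B C) (f0 f1 g : Hom A B),
      IsSum f0 f1 g -> IsSum (h ∘ f0) (h ∘ f1) (h ∘ g);
  sum_compr : forall (A B C : Ob c) (k : Hom A B) (f0 f1 g : Hom B C),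
      IsSum f0 f1 g -> IsSum (f0 ∘ k) (f1 ∘ k) (g ∘ k);
  sum_tensl : forall (A B C D : Ob c) (k : Hom C D) (f0 f1 g : Hom A B),
      IsSum f0 f1 g -> IsSum (tensm f0 k) (tensm f1 k) (tensm g k);
  sum_tensr : forall (A B C D : Ob c) (k : Hom A B) (f0 f1 g : Hom C D),
      IsSum f0 f1 g -> IsSum (tensm k f0) (tensm k f1) (tensm k g);
  iota0_pi0 : forall A : Ob c, pi0 A ∘ iota0 A = idm A;
  iota0_pi1 : forall A : Ob c, pi1 A ∘ iota0 A = zero A A;
  tau_nat : forall (A B : Ob c) (f : Hom A B), tau B ∘ Sm (Sm f) = Sm f ∘ tau A;
  tau_pi0 : forall A : Ob c, pi0 A ∘ tau A = pi0 A ∘ pi0 (S A);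
  tau_pi1 : forall A : Ob c,
      IsSum (pi1 A ∘ pi0 (S A)) (pi0 A ∘ pi1 (S A)) (pi1 A ∘ tau A);
  flip_00 : forall A : Ob c, pi0 A ∘ pi0 (S A) ∘ flip A = pi0 A ∘ pi0 (S A);
  flip_01 : forall A : Ob c, pi0 A ∘ pi1 (S A) ∘ flip A = pi1 A ∘ pi0 (S A);
  flip_10 : forall A : Ob c, pi1 A ∘ pi0 (S A) ∘ flip A = pi0 A ∘ pi1 (S A);
  flip_11 : forall A : Ob c, pi1 A ∘ pi1 (S A) ∘ flip A = pi1 A ∘ pi1 (S A);
  phi0_pi0 : forall A B : Ob c, pi0 (tens A B) ∘ phi0 A B = tensm (pi0 A) (idm B);
  phi0_pi1 : forall A B : Ob c, pi1 (tens A B) ∘ phi0 A B = tensm (pi1 A) (idm B);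
  phi1_pi0 : forall A B : Ob c, pi0 (tens A B) ∘ phi1 A B = tensm (idm A) (pi0 B);
  phi1_pi1 : forall A B : Ob c, pi1 (tens A B) ∘ phi1 A B = tensm (idm A) (pi1 B);
  Sprod_iso1 : forall A B : Ob c, Sprodi A B ∘ Sprod A B = idm _;
  Sprod_iso2 : forall A B : Ob c, Sprod A B ∘ Sprodi A B = idm _;
  dpart_nat : forall (A B : Ob c) (f : Hom A B),
      dpart B ∘ bangm (Sm f) = Sm (bangm f) ∘ dpart A;
  dpart_pi0 : forall A : Ob c, pi0 (Bang A) ∘ dpart A = bangm (pi0 A);
  dpart_iota0 : forall A : Ob c, dpart A ∘ bangm (iota0 A) = iota0 (Bang A);
  dpart_tau : forall A : Ob c,
      tau (Bang A) ∘ Sm (dpart A) ∘ dpart (S A) = dpart A ∘ bangm (tau A);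
  dpart_der : forall A : Ob c, Sm (der A) ∘ dpart A = der (S A);
  dpart_dig : forall A : Ob c,
      Sm (dig A) ∘ dpart A = dpart (Bang A) ∘ bangm (dpart A) ∘ dig (S A);
  dpart_m0 : Sm m0i ∘ dpart Top = iota0 One ∘ m0i ∘ bangm (zero (S (@Top c)) Top);
  dpart_m2 : forall A B : Ob c,
      Sm (m2i A B) ∘ dpart (With A B)
      = Lmap (Bang A) (Bang B) ∘ tensm (dpart A) (dpart B) ∘ m2i (S A) (S B)
        ∘ bangm (Sprod A B);
  dpart_schwarz : forall A : Ob c,
      flip (Bang A) ∘ Sm (dpart A) ∘ dpart (S A)
      = Sm (dpart A) ∘ dpart (S A) ∘ bangm (flip A);
  (* closedness assumption: Cur(D Ev o_! psi^0) is an isomorphism of L_! *)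
  curD_iso1 : forall X Y : Ob c, kcomp (curD X Y) (curDi X Y) = der (Imp X (S Y));
  curD_iso2 : forall X Y : Ob c, kcomp (curDi X Y) (curD X Y) = der (S (Imp X Y))
}.

From Stdlib Require Import Setoid.

(* Both sides reduce to the normal form
     S ev ∘ L ∘ (curD⁻¹ ⊗ ∂_X) ∘ (m²)⁻¹ : (X ⇒ SY) & SX → SY.
   On the left this is the Seely expansion of D Ev = S(Ev) ∘ ∂, simplified by
   S der ∘ ∂ = der.  On the right, ψ¹ feeds ι₀ into the first argument of L,
   which turns L into the strength φ¹; the closedness isomorphism rewrites the
   evaluation at SY as S ev ∘ φ⁰ ∘ (curD⁻¹ ⊗ id), since curD is the currying of
   S ev ∘ φ⁰; finally μ = τ merges the two strengths into τ ∘ Sφ⁰ ∘ φ¹, which is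
   L again because both have the same projections. *)

Section ClosedCDRC_theory.
Variable c : CatData.
Hypothesis HL : ClosedCDRC c.

Ltac assoc := repeat rewrite (comp_assoc _ HL).
Ltac simpl_id := repeat first [rewrite (comp_idl _ HL) | rewrite (comp_idr _ HL)].

(* Rewrites with [E : l = r] inside a left-associated chain, where [l] itself
   may be a composite and hence not a subterm of the chain. *)
Ltac rewrite_chain E :=
  lazymatch type of E with
  | @eq (@Hom _ _ ?B) ?l ?r =>
      let E' := fresh "E" in
      assert (E' : forall D (k : Hom B D), k ∘ l = k ∘ r)
        by (intros; rewrite E; reflexivity);
      repeat setoid_rewrite (comp_assoc _ HL) in E';
      first [rewrite E' | rewrite E]; clear E'; assoc
  end.

Ltac merge_tensm :=
  match goal with |- context [?k ∘ tensm ?a ?b ∘ tensm ?a' ?b'] =>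
    rewrite_chain (eq_sym (tensm_comp _ HL _ _ _ _ _ _ a' a b' b))
  end.

Lemma sum_unique (A B : Ob c) (f0 f1 g g' : Hom A B) :
  IsSum f0 f1 g -> IsSum f0 f1 g' -> g = g'.
Proof.
  intros [h [H0 [H1 H2]]] [h' [H0' [H1' H2']]].
  assert (h = h') by (apply (pi_jointly_monic _ HL); congruence).
  subst; congruence.
Qed.

Lemma sum_0r (A B : Ob c) (f g : Hom A B) : IsSum f (zero A B) g -> g = f.
Proof. intros H. exact (sum_unique _ _ _ _ _ _ H (sum_zero _ HL _ _ f)). Qed.

Lemma sum_0l (A B : Ob c) (f g : Hom A B) : IsSum (zero A B) f g -> g = f.
Proof. intros H. apply sum_0r, (sum_comm _ HL), H. Qed.

Lemma kcomp_lam_r (A B C : Ob c) (g : Hom (Bang B) C) (h : Hom A B) :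
  kcomp g (lam h) = g ∘ bangm h.
Proof.
  unfold kcomp, lam. rewrite (bangm_comp _ HL). assoc.
  rewrite_chain (bangder_dig _ HL A). simpl_id. reflexivity.
Qed.

Lemma kcomp_lam_l (A B C : Ob c) (g : Hom B C) (f : Hom (Bang A) B) :
  kcomp (lam g) f = g ∘ f.
Proof.
  unfold kcomp, lam. rewrite_chain (der_nat _ HL _ _ f).
  rewrite_chain (der_dig _ HL A). simpl_id. reflexivity.
Qed.

Lemma pair_comp (D C A B : Ob c) (a : Hom C A) (b : Hom C B) (h : Hom D C) :
  pair a b ∘ h = pair (a ∘ h) (b ∘ h).
Proof.
  rewrite <- (pair_eta _ HL _ _ _ (pair a b ∘ h)). assoc.
  rewrite (pair_p0 _ HL), (pair_p1 _ HL). reflexivity.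
Qed.

Lemma tensm_compl (A B C D : Ob c) (f : Hom A B) (g : Hom B C) :
  tensm (g ∘ f) (idm D) = tensm g (idm D) ∘ tensm f (idm D).
Proof. rewrite <- (tensm_comp _ HL). simpl_id. reflexivity. Qed.

Definition is_proj (p : forall A : Ob c, Hom (S A) A) : Prop := p = pi0 \/ p = pi1.

Lemma pi0_proj : is_proj pi0.
Proof. left; reflexivity. Qed.

Lemma pi1_proj : is_proj pi1.
Proof. right; reflexivity. Qed.

Section Projection.
Variable p : forall A : Ob c, Hom (S A) A.
Hypothesis Hp : is_proj p.

Lemma proj_nat (A B : Ob c) (f : Hom A B) : p B ∘ Sm f = f ∘ p A.
Proof. destruct Hp; subst; [apply (pi0_nat _ HL) | apply (pi1_nat _ HL)]. Qed.

Lemma proj_phi0 (A B : Ob c) : p (tens A B) ∘ phi0 A B = tensm (p A) (idm B).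
Proof. destruct Hp; subst; [apply (phi0_pi0 _ HL) | apply (phi0_pi1 _ HL)]. Qed.

Lemma proj_phi1 (A B : Ob c) : p (tens A B) ∘ phi1 A B = tensm (idm A) (p B).
Proof. destruct Hp; subst; [apply (phi1_pi0 _ HL) | apply (phi1_pi1 _ HL)]. Qed.

End Projection.

Lemma proj_monic (A B : Ob c) (h h' : Hom A (S B)) :
  (forall p, is_proj p -> p B ∘ h = p B ∘ h') -> h = h'.
Proof. intros H. apply (pi_jointly_monic _ HL); apply H; [apply pi0_proj | apply pi1_proj]. Qed.

Lemma proj_Sphi1_phi0 p q (Hp : is_proj p) (Hq : is_proj q) (A B : Ob c) :
  p _ ∘ q _ ∘ Sm (phi1 A B) ∘ phi0 A (S B) = tensm (q A) (p B).
Proof.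
  rewrite_chain (proj_nat q Hq _ _ (phi1 A B)). rewrite (proj_phi1 p Hp).
  rewrite_chain (proj_phi0 q Hq A (S B)). rewrite <- (tensm_comp _ HL). simpl_id.
  reflexivity.
Qed.

Lemma proj_Sphi0_phi1 p q (Hp : is_proj p) (Hq : is_proj q) (A B : Ob c) :
  p _ ∘ q _ ∘ Sm (phi0 A B) ∘ phi1 (S A) B = tensm (p A) (q B).
Proof.
  rewrite_chain (proj_nat q Hq _ _ (phi0 A B)). rewrite (proj_phi0 p Hp).
  rewrite_chain (proj_phi1 q Hq (S A) B). rewrite <- (tensm_comp _ HL). simpl_id.
  reflexivity.
Qed.

Lemma phi0_nat (A A' B B' : Ob c) (f : Hom A A') (g : Hom B B') :
  Sm (tensm f g) ∘ phi0 A B = phi0 A' B' ∘ tensm (Sm f) g.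
Proof.
  apply proj_monic; intros p Hp. assoc. rewrite (proj_nat p Hp).
  rewrite_chain (proj_phi0 p Hp A B). rewrite (proj_phi0 p Hp).
  rewrite <- !(tensm_comp _ HL), (proj_nat p Hp). simpl_id. reflexivity.
Qed.

Lemma phi1_nat (A A' B B' : Ob c) (f : Hom A A') (g : Hom B B') :
  Sm (tensm f g) ∘ phi1 A B = phi1 A' B' ∘ tensm f (Sm g).
Proof.
  apply proj_monic; intros p Hp. assoc. rewrite (proj_nat p Hp).
  rewrite_chain (proj_phi1 p Hp A B). rewrite (proj_phi1 p Hp).
  rewrite <- !(tensm_comp _ HL), (proj_nat p Hp). simpl_id. reflexivity.
Qed.

Lemma pi0_Lmap (A B : Ob c) : pi0 (tens A B) ∘ Lmap A B = tensm (pi0 A) (pi0 B).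
Proof.
  unfold Lmap. assoc. rewrite (tau_pi0 _ HL).
  exact (proj_Sphi1_phi0 _ _ pi0_proj pi0_proj A B).
Qed.

Lemma pi1_Lmap (A B : Ob c) :
  IsSum (tensm (pi0 A) (pi1 B)) (tensm (pi1 A) (pi0 B)) (pi1 (tens A B) ∘ Lmap A B).
Proof.
  pose proof (sum_compr _ HL _ _ _ (Sm (phi1 A B) ∘ phi0 A (S B)) _ _ _
                (tau_pi1 _ HL (tens A B))) as H.
  rewrite !(comp_assoc _ HL) in H.
  rewrite (proj_Sphi1_phi0 _ _ pi1_proj pi0_proj),
          (proj_Sphi1_phi0 _ _ pi0_proj pi1_proj) in H.
  unfold Lmap. assoc. exact H.
Qed.

Lemma Lmap_nat (A A' B B' : Ob c) (f : Hom A A') (g : Hom B B') :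
  Sm (tensm f g) ∘ Lmap A B = Lmap A' B' ∘ tensm (Sm f) (Sm g).
Proof.
  unfold Lmap. assoc. rewrite <- (tau_nat _ HL).
  rewrite_chain (eq_sym (Sm_comp _ HL _ _ _ (phi1 A B) (Sm (tensm f g)))).
  rewrite phi1_nat, (Sm_comp _ HL). assoc.
  rewrite_chain (phi0_nat _ _ _ _ f (Sm g)). reflexivity.
Qed.

(* From here on L is used only through the lemmas above; keeping it opaque stops
   [setoid_rewrite] in [rewrite_chain] from unfolding it. *)
Local Opaque Lmap.

Lemma Lmap_unique (A B : Ob c) (h : Hom (tens (S A) (S B)) (S (tens A B))) :
  pi0 _ ∘ h = tensm (pi0 A) (pi0 B) ->
  IsSum (tensm (pi0 A) (pi1 B)) (tensm (pi1 A) (pi0 B)) (pi1 _ ∘ h) ->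
  h = Lmap A B.
Proof.
  intros H0 H1. apply (pi_jointly_monic _ HL).
  - rewrite H0, pi0_Lmap. reflexivity.
  - exact (sum_unique _ _ _ _ _ _ H1 (pi1_Lmap A B)).
Qed.

Lemma Lmap_swap (A B : Ob c) :
  tau (tens A B) ∘ Sm (phi0 A B) ∘ phi1 (S A) B = Lmap A B.
Proof.
  apply Lmap_unique.
  - assoc. rewrite (tau_pi0 _ HL). exact (proj_Sphi0_phi1 _ _ pi0_proj pi0_proj A B).
  - pose proof (sum_compr _ HL _ _ _ (Sm (phi0 A B) ∘ phi1 (S A) B) _ _ _
                  (tau_pi1 _ HL (tens A B))) as H.
    rewrite !(comp_assoc _ HL) in H.
    rewrite (proj_Sphi0_phi1 _ _ pi1_proj pi0_proj),
            (proj_Sphi0_phi1 _ _ pi0_proj pi1_proj) in H.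
    assoc. apply (sum_comm _ HL), H.
Qed.

Lemma Lmap_iota0l (A B C : Ob c) (g : Hom C (S B)) :
  Lmap A B ∘ tensm (iota0 A) g = phi1 A B ∘ tensm (idm A) g.
Proof.
  apply (pi_jointly_monic _ HL); assoc.
  - rewrite pi0_Lmap, (phi1_pi0 _ HL), <- !(tensm_comp _ HL), (iota0_pi0 _ HL).
    simpl_id. reflexivity.
  - pose proof (sum_compr _ HL _ _ _ (tensm (iota0 A) g) _ _ _ (pi1_Lmap A B)) as H.
    rewrite <- !(tensm_comp _ HL), (iota0_pi0 _ HL), (iota0_pi1 _ HL),
            (zero_tensl _ HL) in H.
    apply sum_0r in H. rewrite H, (phi1_pi1 _ HL), <- (tensm_comp _ HL).
    simpl_id. reflexivity.
Qed.

Lemma Lmap_iota0r (A B C : Ob c) (g : Hom C (S A)) :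
  Lmap A B ∘ tensm g (iota0 B) = phi0 A B ∘ tensm g (idm B).
Proof.
  apply (pi_jointly_monic _ HL); assoc.
  - rewrite pi0_Lmap, (phi0_pi0 _ HL), <- !(tensm_comp _ HL), (iota0_pi0 _ HL).
    simpl_id. reflexivity.
  - pose proof (sum_compr _ HL _ _ _ (tensm g (iota0 B)) _ _ _ (pi1_Lmap A B)) as H.
    rewrite <- !(tensm_comp _ HL), (iota0_pi0 _ HL), (iota0_pi1 _ HL),
            (zero_tensr _ HL) in H.
    apply sum_0l in H. rewrite H, (phi0_pi1 _ HL), <- (tensm_comp _ HL).
    simpl_id. reflexivity.
Qed.

Lemma m2i_nat (A A' B B' : Ob c) (f : Hom A A') (g : Hom B B') :
  m2i A' B' ∘ bangm (withm f g) = tensm (bangm f) (bangm g) ∘ m2i A B.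
Proof.
  rewrite <- (comp_idr _ HL _ _ (m2i A' B' ∘ bangm (withm f g))),
          <- (m2_iso2 _ HL A B). assoc.
  rewrite_chain (eq_sym (m2_nat _ HL _ _ _ _ f g)).
  rewrite_chain (m2_iso1 _ HL A' B'). simpl_id. reflexivity.
Qed.

Lemma m2i_dig_pair (A B C D : Ob c) (f : Hom (Bang A) C) (g : Hom (Bang B) D) :
  m2i C D ∘ bangm (pair (f ∘ bangm (p0 A B)) (g ∘ bangm (p1 A B))) ∘ dig (With A B)
  = tensm (bangm f ∘ dig A) (bangm g ∘ dig B) ∘ m2i A B.
Proof.
  replace (pair (f ∘ bangm (p0 A B)) (g ∘ bangm (p1 A B)))
    with (withm f g ∘ pair (bangm (p0 A B)) (bangm (p1 A B))).
  2:{ unfold withm. rewrite pair_comp, <- !(comp_assoc _ HL), (pair_p0 _ HL),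
        (pair_p1 _ HL). reflexivity. }
  rewrite (bangm_comp _ HL). assoc.
  rewrite <- (comp_idr _ HL _ _ (_ ∘ dig (With A B))), <- (m2_iso2 _ HL A B). assoc.
  rewrite_chain (m2_dig _ HL A B). rewrite m2i_nat.
  rewrite_chain (m2_iso1 _ HL (Bang A) (Bang B)). simpl_id.
  rewrite <- (tensm_comp _ HL). reflexivity.
Qed.

Lemma bangm_Sprod_Sprodi (A B : Ob c) :
  bangm (Sprod A B) ∘ bangm (Sprodi A B) = idm _.
Proof. rewrite <- (bangm_comp _ HL), (Sprod_iso2 _ HL). apply (bangm_id _ HL). Qed.

Lemma Dk_Ev (X Y : Ob c) :
  Dk (Ev X Y)
  = Sm (ev (Bang X) Y ∘ tensm (der (Imp X Y)) (idm (Bang X))) ∘ Lmap (Bang (Imp X Y)) (Bang X)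
    ∘ tensm (dpart (Imp X Y)) (dpart X) ∘ m2i (S (Imp X Y)) (S X) ∘ bangm (Sprod (Imp X Y) X).
Proof.
  unfold Dk, Ev. rewrite (Sm_comp _ HL _ _ _ (m2i _ _)). assoc.
  rewrite_chain (dpart_m2 _ HL (Imp X Y) X). reflexivity.
Qed.

Lemma curD_strength (X Y : Ob c) :
  curD X Y = cur (Sm (ev (Bang X) Y) ∘ phi0 (Imp X Y) (Bang X)
                  ∘ tensm (der (S (Imp X Y))) (idm (Bang X))).
Proof.
  unfold curD, Cur, psi0. f_equal.
  rewrite kcomp_lam_r, Dk_Ev, (bangm_comp _ HL). assoc.
  rewrite_chain (bangm_Sprod_Sprodi (Imp X Y) X). simpl_id.
  rewrite_chain (m2i_nat _ _ _ _ (idm (S (Imp X Y))) (iota0 X)).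
  rewrite_chain (m2_iso1 _ HL (S (Imp X Y)) X). simpl_id.
  rewrite (bangm_id _ HL). merge_tensm. simpl_id. rewrite (dpart_iota0 _ HL).
  rewrite_chain (Lmap_iota0r _ (Bang X) _ (dpart (Imp X Y))).
  rewrite (Sm_comp _ HL).
  rewrite_chain (phi0_nat _ _ _ _ (der (Imp X Y)) (idm (Bang X))).
  merge_tensm. simpl_id. rewrite (dpart_der _ HL). reflexivity.
Qed.

Lemma ev_curDi (X Y : Ob c) :
  ev (Bang X) (S Y) ∘ tensm (der (Imp X (S Y))) (idm (Bang X))
  = Sm (ev (Bang X) Y) ∘ phi0 (Imp X Y) (Bang X) ∘ tensm (curDi X Y) (idm (Bang X)).
Proof.
  rewrite <- (curD_iso1 _ HL X Y). unfold kcomp.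
  rewrite !tensm_compl, curD_strength. assoc. unfold Imp. rewrite (ev_cur _ HL).
  merge_tensm. merge_tensm. simpl_id. rewrite (der_nat _ HL).
  rewrite_chain (der_dig _ HL (Imp X (S Y))). simpl_id. reflexivity.
Qed.

Definition DEv_normal_form (X Y : Ob c) : Hom (Bang (With (Imp X (S Y)) (S X))) (S Y) :=
  Sm (ev (Bang X) Y) ∘ Lmap (Imp X Y) (Bang X) ∘ tensm (curDi X Y) (dpart X)
  ∘ m2i (Imp X (S Y)) (S X).

Lemma Dk_Ev_curDi (X Y : Ob c) :
  kcomp (kcomp (Dk (Ev X Y)) (lam (Sprodi (Imp X Y) X)))
        (pair (kcomp (curDi X Y) (lam (p0 (Imp X (S Y)) (S X))))
              (kcomp (der (S X)) (lam (p1 (Imp X (S Y)) (S X)))))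
  = DEv_normal_form X Y.
Proof.
  rewrite !kcomp_lam_r, Dk_Ev. unfold kcomp, DEv_normal_form. assoc.
  rewrite_chain (bangm_Sprod_Sprodi (Imp X Y) X). simpl_id.
  rewrite_chain (m2i_dig_pair _ _ _ _ (curDi X Y) (der (S X))).
  rewrite (bangder_dig _ HL). merge_tensm. simpl_id.
  rewrite (Sm_comp _ HL).
  rewrite_chain (Lmap_nat _ _ _ _ (der (Imp X Y)) (idm (Bang X))).
  rewrite (Sm_id _ HL). merge_tensm. simpl_id.
  rewrite (dpart_der _ HL), (der_nat _ HL).
  rewrite_chain (der_dig _ HL (Imp X (S Y))). simpl_id. reflexivity.
Qed.

Lemma mu_Dk_Ev_psi1 (X Y : Ob c) :
  kcomp (kcomp (mu Y) (Dk (Ev X (S Y)))) (psi1 (Imp X (S Y)) X) = DEv_normal_form X Y.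
Proof.
  unfold psi1, mu. rewrite kcomp_lam_r, kcomp_lam_l, Dk_Ev, (bangm_comp _ HL).
  unfold DEv_normal_form. assoc.
  rewrite_chain (bangm_Sprod_Sprodi (Imp X (S Y)) X). simpl_id.
  rewrite_chain (m2i_nat _ _ _ _ (iota0 (Imp X (S Y))) (idm (S X))).
  rewrite (bangm_id _ HL). merge_tensm. simpl_id. rewrite (dpart_iota0 _ HL).
  rewrite_chain (Lmap_iota0l (Bang (Imp X (S Y))) (Bang X) _ (dpart X)).
  rewrite ev_curDi, !(Sm_comp _ HL). assoc.
  rewrite_chain (tau_nat _ HL _ _ (ev (Bang X) Y)).
  rewrite_chain (phi1_nat _ _ _ _ (curDi X Y) (idm (Bang X))).
  rewrite (Sm_id _ HL).
  rewrite_chain (Lmap_swap (Imp X Y) (Bang X)).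
  merge_tensm. simpl_id. reflexivity.
Qed.

End ClosedCDRC_theory.

Theorem mainTheorem9 (c : CatData) (HL : ClosedCDRC c) (X Y : Ob c) :
  kcomp (kcomp (Dk (Ev X Y)) (lam (Sprodi (Imp X Y) X)))
        (pair (kcomp (curDi X Y) (lam (p0 (Imp X (S Y)) (S X))))
              (kcomp (der (S X)) (lam (p1 (Imp X (S Y)) (S X)))))
  = kcomp (kcomp (mu Y) (Dk (Ev X (S Y)))) (psi1 (Imp X (S Y)) X).
Proof. rewrite (Dk_Ev_curDi c HL), (mu_Dk_Ev_psi1 c HL). reflexivity. Qed.
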